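(* Consider a distributed index coding problem with $n$ messages, side-information sets $A_1,\dots,A_n$, and server capacities $\mathbf C=(C_J:J\in N)$. Let $U=\mathrm{cl}(\emptyset)$, and let $V\subseteq[n]\setminus U$ be a set of minimum cardinality with $\mathrm{cl}(U\cup V)=[n]$. Assume $V$ satisfies Condition 1, namely $V\subseteq\mathrm{cl}([n]\setminus V)$. Then every rate tuple $\mathbf R=(R_1,\dots,R_n)$ in the capacity region satisfies \[ \sum_{i\in[n]}R_i\le \sum_{J\in N}C_J+\sum_{J\in N:\ J\cap V\neq\emptyset,\ J\not\subseteq U\cup V}C_J . \]
   Context: A distributed index coding problem has $n$ messages $x_i\in\{0,1\}^{t_i}$ and $2^n-1$ servers, one for each $J\in N=\{J\subseteq[n]:J\neq\emptyset\}$. Server $J$ has access to $x(J)=(x_i:i\in J)$ and is connected to all receivers by a noiseless broadcast link of capacity $C_J\ge 0$. Receiver $i\in[n]$ wants $x_i$ and knows $x(A_i)$ for some $A_i\subseteq[n]\setminus\{i\}$. A $(\mathbf t,\mathbf r)$ distributed index code consists of encoders $\phi_J:\prod_{j\in J}\{0,1\}^{t_j}\to\{0,1\}^{r_J}$ and decoders $\psi_i$ mapping $(\phi_J(x(J)),J\in N)$ and $x(A_i)$ to $\hat x_i$. The messages $X_i$ are independent and uniform. A tuple $(\mathbf R,\mathbf C)$ is achievable if for every $\epsilon>0$ there exist a $(\mathbf t,\mathbf r)$ code and an integer $r$ with $R_i\le t_i/r$ for all $i$, $C_J\ge r_J/r$ for all $J$, and $\Pr\{(\hat X_1,\dots,\hat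 X_n)\neq(X_1,\dots,X_n)\}\le\epsilon$. The capacity region for given $\mathbf C$ is the closure of the set of $\mathbf R$ such that $(\mathbf R,\mathbf C)$ is achievable. For $T\subseteq[n]$, $\mathrm{cl}(T)$ is the smallest set $S\supseteq T$ such that for every $i\in[n]$ with $A_i\subseteq S$ we have $i\in S$. This is the set of messages recoverable from all server outputs together with $x(T)$ by repeatedly applying the receivers' decoding rules. A set $V$ satisfies Condition 1 if $V\subseteq\mathrm{cl}([n]\setminus V)$. If several minimum sets $V$ exist, the bound holds for each one that satisfies Condition 1. *)

From HB Require Import structures.
From mathcomp Require Import all_boot all_order all_algebra.
Set Implicit Arguments. Unset Strict Implicit. Unset Printing Implicit Defensive.
Import Order.TTheory GRing.Theory Num.Theory.
Local Open Scope ring_scope.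

Section DIC.
Variable n : nat.
Variable A : 'I_n -> {set 'I_n}.

Definition dic_closed (S : {set 'I_n}) : bool :=
  [forall i : 'I_n, (A i \subset S) ==> (i \in S)].

Definition cl (T : {set 'I_n}) : {set 'I_n} :=
  \bigcap_(S : {set 'I_n} | (T \subset S) && dic_closed S) S.

Definition msg (t : 'I_n -> nat) := {dffun forall i : 'I_n, (t i).-tuple bool}.

(* A (t, r) distributed index code: server J's encoder depends only on x(J);
   receiver i's decoder sees all server outputs and depends on the messages
   only through x(A_i). Servers are indexed by all subsets; the empty set is
   forced to have r = 0 in [achievable] (and its output is constant anyway). *)
Record dcode (t : 'I_n -> nat) (r : {set 'I_n} -> nat) := DCode {
  enc : forall J : {set 'I_n}, msg t -> (r J).-tuple bool;
  dec : forall i : 'I_n, (forall J : {set 'I_n}, (r J).-tuple bool) ->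
        msg t -> (t i).-tuple bool;
  enc_local : forall (J : {set 'I_n}) (x y : msg t),
      (forall j, j \in J -> x j = y j) -> enc J x = enc J y;
  dec_local : forall i c (x y : msg t),
      (forall j, j \in A i -> x j = y j) -> dec i c x = dec i c y
}.

Definition derror t r (c : dcode t r) (x : msg t) : bool :=
  [exists i : 'I_n, dec c i (fun J => enc c J x) x != x i].

Definition err_prob (R : realFieldType) t r (c : dcode t r) : R :=
  (#|[set x : msg t | derror c x]|)%:R / (#|{: msg t}|)%:R.

Definition achievable (R : realFieldType) (Rt : 'I_n -> R)
    (C : {set 'I_n} -> R) : Prop :=
  forall eps : R, 0 < eps ->
    exists (t : 'I_n -> nat) (r : {set 'I_n} -> nat) (c : dcode t r) (rr : nat),
      [/\ (0 < rr)%N, r set0 = 0%N,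
          forall i, Rt i <= (t i)%:R / rr%:R,
          forall J : {set 'I_n}, J != set0 -> (r J)%:R / rr%:R <= C J
        & err_prob R c <= eps].

Definition in_capacity_region (R : realFieldType) (Rt : 'I_n -> R)
    (C : {set 'I_n} -> R) : Prop :=
  forall eps : R, 0 < eps ->
    exists Rt' : 'I_n -> R, achievable Rt' C /\ forall i, `|Rt i - Rt' i| < eps.

End DIC.

From HB Require Import structures.
From mathcomp Require Import all_boot all_order all_algebra.
From mathcomp Require Import zify ring lra.
From Stdlib Require Import FunctionalExtensionality.
Import Order.TTheory GRing.Theory Num.Theory.
Set Implicit Arguments. Unset Strict Implicit. Unset Printing Implicit Defensive.

(* Take a code with error probability at most 1/4, so that at least 3/4 of the
   2^T message tuples (T = sum_i t_i) are decoded correctly.  For two correctly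
   decoded tuples with the same server outputs, the set of indices where they
   agree is closed under the decoding rules, hence contains the closure of each
   of its subsets, in particular U.  Consequently a pair (x, y) of such tuples is
   determined by the splice (x on V, y off V) and the outputs of x at the servers
   meeting V but not contained in U :|: V: any other server sees only indices off
   V, where y is known, or only indices in U :|: V, where x is known, so all
   outputs of y are determined; then V \subset cl (~: V) recovers y, and
   cl (U :|: V) = [n] recovers x.  There are thus at most 2^T * 2^S_E colliding
   pairs, while Cauchy-Schwarz over the fibres of the output map gives at least
   (3/4 * 2^T)^2 / 2^S of them, so T <= S + S_E for the total output lengths S
   and S_E.  Dividing by r and approximating the capacity region gives the
   bound. *)

Lemma cauchy_schwarz_nat (I : finType) (g : I -> nat) :
  ((\sum_i g i) ^ 2 <= #|I| * \sum_i g i ^ 2)%N.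
Proof.
set N := #|I|; set s := (\sum_i g i)%N.
have amgm : (\sum_i 2 * (N * g i * s) <= \sum_i ((N * g i) ^ 2 + s ^ 2))%N.
  by apply: leq_sum => i _; have [] := nat_Cauchy (N * g i) s.
have lhs : (\sum_i 2 * (N * g i * s) = 2 * N * s ^ 2)%N.
  by rewrite -big_distrr -big_distrl -big_distrr -/s /=; ring.
have rhs : (\sum_i ((N * g i) ^ 2 + s ^ 2) = N ^ 2 * \sum_i g i ^ 2 + N * s ^ 2)%N.
  rewrite big_split sum_nat_const big_distrr /=.
  by congr (_ + _)%N; apply: eq_bigr => i _; rewrite expnMn.
rewrite lhs rhs in amgm.
have [N0 | N_gt0] := posnP N; last by nia.
suff -> : s = 0%N by [].
by apply: big1 => i _; move: N0 => /card0_eq /(_ i).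
Qed.

Lemma sq_card_le_collisions (T Y : finType) (f : T -> Y) (G : {set T}) :
  (#|G| ^ 2 <= #|Y| * #|[set p in setX G G | f p.1 == f p.2]|)%N.
Proof.
pose fiber y := [set x in G | f x == y].
have card_fibers : #|G| = (\sum_y #|fiber y|)%N.
  rewrite -sum1_card (partition_big f xpredT) //=.
  by apply: eq_bigr => y _; rewrite -sum1_card; apply: eq_bigl => x; rewrite inE.
have card_pairs :
    #|[set p in setX G G | f p.1 == f p.2]| = (\sum_y #|fiber y| ^ 2)%N.
  rewrite -sum1_card (partition_big (fun p => f p.1) xpredT) //=.
  apply: eq_bigr => y _; rewrite -mulnn -cardsX -sum1_card.
  apply: eq_bigl => -[a b]; rewrite !inE /=.
  by case: (f a =P y) => [->|_]; rewrite ?andbF // !andbT -andbA eq_sym.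
by rewrite card_fibers card_pairs cauchy_schwarz_nat.
Qed.

Lemma card_tuple_dffun (I : finType) (m : I -> nat) :
  #|{: {dffun forall i : I, (m i).-tuple bool}}| = (2 ^ (\sum_i m i))%N.
Proof.
rewrite card_dep_ffun foldrE big_map big_enum /=.
rewrite (big_morph (fun k => 2 ^ k)%N (expnD 2) (expn0 2)).
by apply: eq_bigr => i _; rewrite card_tuple card_bool.
Qed.

Lemma leq_of_exp2_sq_bound (m k g : nat) :
  (3 * 2 ^ m <= 4 * g)%N -> (g ^ 2 <= 2 ^ k * 2 ^ m)%N -> (m <= k)%N.
Proof.
move=> g_large g_sq; rewrite leqNgt; apply/negP => k_lt_m.
have : (2 * 2 ^ k <= 2 ^ m)%N by rewrite -expnS leq_pexp2l.
have : (0 < 2 ^ k)%N by rewrite expn_gt0.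
move: g_large g_sq; set M := (2 ^ m)%N; set a := (2 ^ k)%N.
nia.
Qed.

Lemma cl_sub_closed (n : nat) (A : 'I_n -> {set 'I_n}) (T S : {set 'I_n}) :
  T \subset S -> dic_closed A S -> cl A T \subset S.
Proof. by move=> TS closedS; apply: bigcap_inf; rewrite TS. Qed.

Section Decoding.
Variables (n : nat) (A : 'I_n -> {set 'I_n}) (t : 'I_n -> nat)
  (r : {set 'I_n} -> nat) (c : dcode A t r).

Definition correct (x : msg t) := ~~ derror c x.

Definition out (x : msg t) : {dffun forall J : {set 'I_n}, (r J).-tuple bool} :=
  [ffun J => enc c J x].

Definition agree (x y : msg t) := [set i | x i == y i].

Lemma correctP x : correct x -> forall i, dec c i (fun J => enc c J x) x = x i.
Proof. by move=> /existsPn x_ok i; apply/eqP; rewrite -[_ == _]negbK x_ok. Qed.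

Lemma enc_eq_out x y : out x = out y -> forall J, enc c J x = enc c J y.
Proof. by move=> /ffunP xy J; have := xy J; rewrite !ffunE. Qed.

Lemma agree_closed x y : correct x -> correct y -> out x = out y ->
  dic_closed A (agree x y).
Proof.
move=> x_ok y_ok /enc_eq_out xy; apply/forallP => i; apply/implyP => /subsetP Ai.
have same_input : (fun J => enc c J x) = (fun J => enc c J y).
  exact: functional_extensionality_dep.
rewrite inE -(correctP x_ok) -(correctP y_ok) same_input; apply/eqP.
by apply: dec_local => j /Ai; rewrite inE => /eqP.
Qed.

Lemma cl_sub_agree x y (S : {set 'I_n}) : correct x -> correct y ->
  out x = out y -> S \subset agree x y -> cl A S \subset agree x y.
Proof. by move=> x_ok y_ok xy Sxy; apply: cl_sub_closed (agree_closed x_ok y_ok xy). Qed.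

Lemma cl0_sub_agree x y : correct x -> correct y -> out x = out y ->
  cl A set0 \subset agree x y.
Proof. by move=> x_ok y_ok xy; rewrite cl_sub_agree ?sub0set. Qed.

Lemma eq_of_agree_setT x y : setT \subset agree x y -> x = y.
Proof.
move=> /subsetP xy; apply/ffunP => i.
by have := xy i (in_setT i); rewrite inE => /eqP.
Qed.

End Decoding.

Section CutSetBound.
Variables (n : nat) (A : 'I_n -> {set 'I_n}) (t : 'I_n -> nat)
  (r : {set 'I_n} -> nat) (c : dcode A t r) (V : {set 'I_n}).
Let U := cl A set0.
Hypotheses (clUV : cl A (U :|: V) = setT) (V_sub_cl : V \subset cl A (~: V)).

Lemma eq_of_agree_V x y : correct c x -> correct c y -> out c x = out c y ->
  V \subset agree x y -> x = y.
Proof.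
move=> x_ok y_ok xy Vxy; apply: eq_of_agree_setT; rewrite -clUV.
by rewrite (cl_sub_agree x_ok y_ok xy) // subUset Vxy (cl0_sub_agree x_ok y_ok xy).
Qed.

Lemma eq_of_agree_setC_V x y : correct c x -> correct c y -> out c x = out c y ->
  ~: V \subset agree x y -> x = y.
Proof.
move=> x_ok y_ok xy nVxy; apply: eq_of_agree_setT; rewrite -(setUCr V) subUset nVxy.
by rewrite (subset_trans V_sub_cl) ?(cl_sub_agree x_ok y_ok xy).
Qed.

Definition crossing :=
  [set J : {set 'I_n} | (J :&: V != set0) && ~~ (J \subset U :|: V)].

Definition crossing_out := {dffun forall J : {J in crossing}, (r (val J)).-tuple bool}.

Definition out_crossing (x : msg t) : crossing_out := [ffun J => enc c (val J) x].

Definition splice (x y : msg t) : msg t := [ffun i => if i \in V then x i else y i].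

Definition correct_msgs := [set x : msg t | correct c x].

Definition collisions :=
  [set p in setX correct_msgs correct_msgs | out c p.1 == out c p.2].

Lemma splice_out_crossing_inj :
  {in collisions &, injective (fun p => (splice p.1 p.2, out_crossing p.1))}.
Proof.
move=> [x1 y1] [x2 y2]; rewrite !inE /=.
move=> /andP[/andP[x1_ok y1_ok] /eqP o1] /andP[/andP[x2_ok y2_ok] /eqP o2] [spl oE].
have onV i : i \in V -> x1 i = x2 i.
  by move=> iV; move/ffunP: spl => /(_ i); rewrite !ffunE iV.
have offV i : i \notin V -> y1 i = y2 i.
  by move=> /negbTE iV; move/ffunP: spl => /(_ i); rewrite !ffunE iV.
have onUV i : i \in U :|: V -> x1 i = x2 i.
  case: (boolP (i \in V)) => [/onV //| iV]; rewrite inE (negbTE iV) orbF => iU.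
  have /subsetP/(_ i iU) := cl0_sub_agree x1_ok y1_ok o1.
  have /subsetP/(_ i iU) := cl0_sub_agree x2_ok y2_ok o2.
  by rewrite !inE => /eqP -> /eqP ->; apply: offV.
have enc_y J : enc c J y1 = enc c J y2.
  rewrite -(enc_eq_out o1) -(enc_eq_out o2).
  have [J_cross | ] := boolP (J \in crossing).
    by move/ffunP: oE => /(_ (Sub J J_cross)); rewrite !ffunE.
  rewrite inE negb_and !negbK setI_eq0 => /orP[JV | /subsetP JUV].
    rewrite (enc_eq_out o1) (enc_eq_out o2); apply: enc_local => j jJ.
    by apply: offV; rewrite (disjointFr JV jJ).
  by apply: enc_local => j /JUV; apply: onUV.
have y12 : y1 = y2.
  apply: eq_of_agree_setC_V y1_ok y2_ok _ _.
    by apply/ffunP => J; rewrite !ffunE.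
  by apply/subsetP => i; rewrite !inE => /offV ->.
have o12 : out c x1 = out c x2 by rewrite o1 y12 o2.
rewrite -y12 (eq_of_agree_V x1_ok x2_ok o12) //.
by apply/subsetP => i iV; rewrite inE onV.
Qed.

Lemma card_collisions_le : (#|collisions| <= #|{: msg t}| * #|{: crossing_out}|)%N.
Proof. by rewrite -(card_in_imset splice_out_crossing_inj) -card_prod max_card. Qed.

Lemma code_sum_bound : (4 * #|[set x | derror c x]| <= #|{: msg t}|)%N ->
  (\sum_i t i <= \sum_J r J + \sum_(J in crossing) r J)%N.
Proof.
rewrite /msg card_tuple_dffun => few_errors.
apply: (@leq_of_exp2_sq_bound _ _ #|correct_msgs|).
  have : (#|correct_msgs| + #|[set x | derror c x]| = 2 ^ \sum_i t i)%N.
    rewrite -card_tuple_dffun -(cardsC [set x | derror c x]) addnC.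
    by congr (_ + _)%N; apply: eq_card => x; rewrite !inE.
  lia.
have sq_correct := sq_card_le_collisions (out c) correct_msgs.
have coll := card_collisions_le.
rewrite /msg /crossing_out !card_tuple_dffun -big_sub in sq_correct coll.
apply: (leq_trans sq_correct).
by rewrite expnD -mulnA leq_mul2l mulnC; apply/orP; right.
Qed.

End CutSetBound.

Local Open Scope ring_scope.

Lemma le_sum_of_approx (R : realFieldType) (I : finType) (x : I -> R) (B : R) :
  (forall eps, 0 < eps ->
     exists y : I -> R, (forall i, `|x i - y i| < eps) /\ \sum_i y i <= B) ->
  \sum_i x i <= B.
Proof.
move=> approx; apply/ler_addgt0Pr => e e_gt0.
have N1_gt0 : 0 < #|I|%:R + 1 :> R by rewrite ltr_wpDl.
pose d := e / (#|I|%:R + 1).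
have [y [xy sumy]] := approx d (divr_gt0 e_gt0 N1_gt0).
have sumx : \sum_i x i <= \sum_i y i + #|I|%:R * d.
  rewrite mulr_natl -sumr_const -big_split /=; apply: ler_sum => i _.
  by have := xy i; have := ler_norm (x i - y i); lra.
have Nd_le_e : #|I|%:R * d <= e.
  by rewrite mulrA ler_pdivrMr // mulrDr mulr1 mulrC lerDl ltW.
lra.
Qed.

Lemma achievable_sum_le (R : realFieldType) (n : nat) (A : 'I_n -> {set 'I_n})
    (C : {set 'I_n} -> R) (V : {set 'I_n}) (Rt : 'I_n -> R) :
  cl A (cl A set0 :|: V) = setT -> V \subset cl A (~: V) ->
  achievable A Rt C ->
  \sum_i Rt i <= \sum_(J | J != set0) C J + \sum_(J in crossing A V) C J.
Proof.
move=> clUV V_sub_cl ach.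
have quarter_gt0 : 0 < 1 / 4 :> R by rewrite divr_gt0.
have [t [r [c [rr [rr_gt0 r0 Rt_le rC err]]]]] := ach _ quarter_gt0.
have few_errors : (4 * #|[set x | derror c x]| <= #|{: msg t}|)%N.
  have msg_gt0 : 0 < #|{: msg t}|%:R :> R.
    by rewrite ltr0n /msg card_tuple_dffun expn_gt0.
  move: err; rewrite /err_prob ler_pdivrMr // -(ler_nat R) natrM; lra.
have rate_sum : \sum_i Rt i <= (\sum_i t i)%:R / rr%:R.
  by rewrite natr_sum mulr_suml; apply: ler_sum => i _.
apply: (le_trans rate_sum).
rewrite ler_pdivrMr ?ltr0n // mulrDl.
have r_le J : J != set0 -> (r J)%:R <= C J * rr%:R.
  by move/rC; rewrite ler_pdivrMr ?ltr0n.
have sum_r_le (P : pred {set 'I_n}) : (forall J, P J -> J != set0) ->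
    (\sum_(J | P J) r J)%:R <= (\sum_(J | P J) C J) * rr%:R.
  by move=> P_ne; rewrite natr_sum mulr_suml; apply: ler_sum => J /P_ne /r_le.
apply: le_trans (_ : (\sum_J r J + \sum_(J in crossing A V) r J)%N%:R <= _).
  by rewrite ler_nat (code_sum_bound clUV V_sub_cl few_errors).
rewrite natrD lerD //; last first.
  apply: sum_r_le => J; rewrite inE => /andP[JV _].
  by apply: contraNneq JV => ->; rewrite set0I.
by rewrite (bigD1 set0) //= r0 add0n; apply: sum_r_le.
Qed.

Theorem theorem2 (R : realFieldType) (n : nat) (A : 'I_n -> {set 'I_n})
    (hA : forall i, i \notin A i)
    (C : {set 'I_n} -> R) (hC : forall J : {set 'I_n}, J != set0 -> 0 <= C J)
    (V : {set 'I_n}) :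
  let U := cl A set0 in
  V \subset ~: U ->
  cl A (U :|: V) = setT ->
  (forall W : {set 'I_n}, W \subset ~: U -> cl A (U :|: W) = setT ->
     (#|V| <= #|W|)%N) ->
  V \subset cl A (~: V) ->
  forall Rt : 'I_n -> R, in_capacity_region A Rt C ->
    \sum_(i : 'I_n) Rt i <=
      \sum_(J : {set 'I_n} | J != set0) C J
      + \sum_(J : {set 'I_n} | (J :&: V != set0) && ~~ (J \subset U :|: V)) C J.
Proof.
move=> U _ clUV _ V_sub_cl Rt in_region.
rewrite [X in _ <= _ + X](eq_bigl (fun J => J \in crossing A V)); last first.
  by move=> J; rewrite inE.
apply: le_sum_of_approx => eps eps_gt0.
have [Rt' [ach close]] := in_region eps eps_gt0.
by exists Rt'; split; last exact: achievable_sum_le.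
Qed.
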